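(* Let $L$ be a finite multiset of positive integers. If $L$ admits a special linear realization of type $1$, then for every positive integer $b$ the multiset $L\cup\{2^b\}$ also admits a special linear realization of type $1$.
   Context: For a multiset $L$ of positive integers with $|L|=v-1$, each at most $v-1$, a linear realization of $L$ is a Hamiltonian path $[x_0,x_1,\dots,x_{v-1}]$ of the complete graph on $\{0,1,\dots,v-1\}$ such that the multiset $\{|x_i-x_{i+1}| : i=0,\dots,v-2\}$ equals $L$. A linear realization of $L$ is special of type $1$ if the vertices $|L|$ and $|L|-1$ are adjacent (consecutive) in the path. $\{2^b\}$ denotes the multiset of $b$ copies of $2$, and $\cup$ is multiset union. *)

From mathcomp Require Import all_boot.
Set Implicit Arguments. Unset Strict Implicit. Unset Printing Implicit Defensive.

(* Multisets of naturals are represented by sequences, compared up to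
   permutation (perm_eq). *)

Definition absd (x y : nat) : nat := (x - y) + (y - x).

Definition edges (p : seq nat) : seq (nat * nat) := zip p (behead p).

Definition edge_lengths (p : seq nat) : seq nat :=
  [seq absd e.1 e.2 | e <- edges p].

(* p = [x_0,...,x_{v-1}] is a linear realization of L, where v = |L| + 1:
   p is a Hamiltonian path of K_v on {0,...,v-1} (a permutation of the
   vertex set) and its multiset of edge lengths equals L. *)
Definition linear_realization (L : seq nat) (p : seq nat) : bool :=
  perm_eq p (iota 0 (size L).+1) && perm_eq (edge_lengths p) L.

Definition adjacent_in (p : seq nat) (a b : nat) : bool :=
  has (fun e => (e == (a, b)) || (e == (b, a))) (edges p).

Definition special1_realization (L : seq nat) (p : seq nat) : bool :=
  linear_realization L p && adjacent_in p (size L) (size L).-1.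

Definition admits_special1 (L : seq nat) : Prop :=
  exists p : seq nat, special1_realization L p.

From mathcomp Require Import all_boot zify.

(* Writing n := |L|, the edge {n, n-1} of a special realization has length 1.
   Inserting the new vertex n+1 between n and n-1 replaces that edge by two
   edges of lengths 1 and 2, so the lengths grow by exactly one 2; the new
   path still covers {0,...,n+1}, and its top two vertices n+1 and n are
   adjacent, so it is again special of type 1.  Iterate b times. *)

Lemma edges_cat s x t : edges (s ++ x :: t) = edges (rcons s x) ++ edges (x :: t).
Proof.
case: s => [|a s] //.
by elim: s a => [|c s IH] a //; rewrite /= -IH.
Qed.

Lemma edge_lengths_cat s x t :
  edge_lengths (s ++ x :: t) = edge_lengths (rcons s x) ++ edge_lengths (x :: t).
Proof. by rewrite /edge_lengths edges_cat map_cat. Qed.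

Lemma edge_lengths_insert A x z y B :
  perm_eq (absd x y :: edge_lengths (A ++ [:: x, z, y & B]))
          (absd x z :: absd z y :: edge_lengths (A ++ [:: x, y & B])).
Proof.
rewrite !edge_lengths_cat /edge_lengths /=.
by apply/permP => f; rewrite /= !count_cat /=; lia.
Qed.

Lemma has_edges_split (P : pred (nat * nat)) p :
  has P (edges p) -> exists A x y B, p = A ++ [:: x, y & B] /\ P (x, y).
Proof.
elim: p => [|a [|c p] IH] //= /orP [P_ac|has_p]; first by exists [::], a, c, p.
have [A [x [y [B [-> P_xy]]]]] := IH has_p.
by exists (a :: A), x, y, B.
Qed.

Lemma absdC x y : absd x y = absd y x.
Proof. by rewrite /absd addnC. Qed.

Lemma absd_succ n : absd n n.+1 = 1.
Proof. by rewrite /absd; lia. Qed.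

Lemma absd_succ2 n : absd n n.+2 = 2.
Proof. by rewrite /absd; lia. Qed.

Lemma absd_insert_top {n x y} :
  x != y -> ((x, y) == (n, n.-1)) || ((x, y) == (n.-1, n)) ->
  perm_eq [:: absd x n.+1; absd n.+1 y] [:: absd x y; 2].
Proof.
move=> neq_xy /orP [] /eqP [ex ey]; subst x y;
  case: n neq_xy => [|n] //= _;
  by rewrite ?[absd n.+2 _]absdC ?[absd n.+1 n]absdC !absd_succ absd_succ2.
Qed.

Lemma perm_admits_special1 {L L'} :
  perm_eq L L' -> admits_special1 L -> admits_special1 L'.
Proof.
move=> eqLL' [p /andP [/andP [vert_p len_p] adj_p]].
exists p; rewrite /special1_realization /linear_realization -(perm_size eqLL').
by rewrite vert_p adj_p (perm_trans len_p eqLL').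
Qed.

Lemma admits_special1_rcons2 {L} : admits_special1 L -> admits_special1 (rcons L 2).
Proof.
move=> [p /andP [/andP [vert_p len_p] adj_p]].
set n := size L in vert_p adj_p.
have [A [x [y [B [def_p top_xy]]]]] := has_edges_split _ _ adj_p.
have neq_xy : x != y.
  move: (iota_uniq 0 n.+1); rewrite -(perm_uniq vert_p) def_p cat_uniq /=.
  by rewrite inE negb_or => /and5P [_ _ /norP [] ].
exists (A ++ [:: x, n.+1, y & B]).
rewrite /special1_realization /linear_realization size_rcons.
apply/andP; split; [apply/andP; split|].
- have ins_vert : perm_eq (A ++ [:: x, n.+1, y & B]) (n.+1 :: p).
    by rewrite def_p; apply/permP => f; rewrite /= !count_cat /=; lia.
  apply: (perm_trans ins_vert).
  rewrite -[n.+2]addn1 iotaD add0n cats1 perm_sym perm_rcons perm_cons.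
  by rewrite perm_sym.
- rewrite -(perm_cons (absd x y)).
  apply: (perm_trans (edge_lengths_insert _ _ _ _ _)).
  rewrite -[absd x n.+1 :: _]cat1s -[X in _ ++ X]cat1s catA.
  rewrite (perm_catr _ (absd_insert_top neq_xy top_xy)) -def_p /= perm_cons.
  by rewrite perm_sym perm_rcons perm_cons perm_sym.
- rewrite /adjacent_in edges_cat has_cat /= -/n.
  by case/orP: top_xy => /eqP [-> ->]; rewrite !eqxx !orbT.
Qed.

Theorem lemma2p2 (L : seq nat) :
  all (fun x => 0 < x) L ->
  admits_special1 L ->
  forall b : nat, 0 < b -> admits_special1 (L ++ nseq b 2).
Proof.
move=> _ adm_L b _; elim: b => [|b IH]; first by rewrite cats0.
apply: (perm_admits_special1 _ (admits_special1_rcons2 IH)).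
by rewrite -cats1 -catA perm_cat2l /= -cat1s perm_catC.
Qed.
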